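(* Let $Q$ be a finite power associative loop satisfying $(ab^i)b^j=ab^{i+j}$ for all $a,b\in Q$ and all $i,j\in\mathbb Z$. Then the order of every $x\in Q$ divides $|Q|$.
   Context: A loop is a magma with identity in which all left and right translations are bijections; it is power associative if every element generates a subgroup (so powers $b^i$, $i\in\mathbb Z$, are well defined). *)

From mathcomp Require Import all_boot all_order all_algebra.
Set Implicit Arguments. Unset Strict Implicit. Unset Printing Implicit Defensive.
Import GRing.Theory.

Section Loops.
Variables (T : finType) (mul : T -> T -> T) (e : T).

Definition is_loop : Prop :=
  (forall x, mul e x = x /\ mul x e = x) /\
  (forall a, bijective (mul a)) /\
  (forall a, bijective (fun x => mul x a)).

Definition ldiv (a c : T) : T := odflt e [pick y | mul a y == c].
Definition rdiv (c a : T) : T := odflt e [pick y | mul y a == c].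

Definition subloop_closed (S : {set T}) : bool :=
  [forall x in S, forall y in S,
     [&& mul x y \in S, ldiv x y \in S & rdiv x y \in S]].

Definition gen (b : T) : {set T} :=
  \bigcap_(S : {set T} | (b \in S) && subloop_closed S) S.

Definition power_associative : Prop :=
  forall b, {in gen b & gen b & gen b, forall x y z, mul (mul x y) z = mul x (mul y z)}.

(* Powers b^n (n : nat) and b^i (i : int); b^(-n) is the inverse of b^n. *)
Definition npow (b : T) (n : nat) : T := iter n (fun y => mul y b) e.
Definition zpow (b : T) (i : int) : T :=
  match i with
  | Posz n => npow b n
  | Negz n => ldiv (npow b n.+1) e
  end.

Definition elt_order (x : T) : nat := #|gen x|.

End Loops.

From mathcomp Require Import all_boot all_order all_algebra.
From mathcomp Require Import fingroup perm.
From mathcomp Require Import zify.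
Set Implicit Arguments. Unset Strict Implicit. Unset Printing Implicit Defensive.

(* The identity (a x^i) x^j = a x^(i+j) makes the powers of x a cyclic
   subgroup P = <x> and makes the left cosets a P behave as in a group:
   b in a P implies b P = a P. Since left translations are injective, all
   cosets have #|P| elements, so they form a uniform partition of the
   loop and #|P| divides #|T|. *)

Section Loop.
Variables (T : finType) (mul : T -> T -> T) (e : T).
Hypothesis loopT : is_loop mul e.

Lemma mul_idl x : mul e x = x. Proof. by case: loopT => /(_ x)[]. Qed.
Lemma mul_idr x : mul x e = x. Proof. by case: loopT => /(_ x)[]. Qed.

Lemma mulI a : injective (mul a).
Proof. by case: loopT => _ [/(_ a) /bij_inj]. Qed.

Lemma mulIr a : injective (mul^~ a).
Proof. by case: loopT => _ [_ /(_ a) /bij_inj]. Qed.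

Lemma ldiv_mul a y : ldiv mul e a (mul a y) = y.
Proof.
rewrite /ldiv; case: pickP => [z /eqP/mulI -> // | none].
by have := none y; rewrite eqxx.
Qed.

Lemma rdiv_mul a y : rdiv mul e (mul y a) a = y.
Proof.
rewrite /rdiv; case: pickP => [z /eqP/mulIr -> // | none].
by have := none y; rewrite eqxx.
Qed.

Section LeftCosets.
Variable P : {set T}.

Definition lcoset (a : T) : {set T} := [set mul a y | y in P].

Hypothesis P_id : e \in P.
Hypothesis lcoset_mulr : forall a, {in P &, forall p q, mul (mul a p) q \in lcoset a}.

Lemma card_lcoset a : #|lcoset a| = #|P|.
Proof. exact/card_imset/mulI. Qed.

Lemma lcoset_refl a : a \in lcoset a.
Proof. by apply/imsetP; exists e; rewrite ?mul_idr. Qed.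

Lemma lcoset_eq a b : b \in lcoset a -> lcoset b = lcoset a.
Proof.
case/imsetP=> p Pp ->; apply/eqP; rewrite eqEcard !card_lcoset leqnn andbT.
by apply/subsetP => _ /imsetP[q Pq ->]; apply: lcoset_mulr.
Qed.

Lemma lcoset_partition : partition [set lcoset a | a in T] [set: T].
Proof.
apply/and3P; split.
- apply/eqP/setP => y; rewrite in_setT; apply/bigcupP.
  by exists (lcoset y); rewrite ?imset_f ?lcoset_refl.
- apply/trivIsetP => _ _ /imsetP[a _ ->] /imsetP[b _ ->] neq_ab.
  rewrite -setI_eq0; apply: contraR neq_ab => /set0Pn[c /setIP[ac bc]].
  by rewrite -(lcoset_eq ac) -(lcoset_eq bc).
- by apply/imsetP => -[a _ /setP/(_ a)]; rewrite lcoset_refl inE.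
Qed.

Lemma lagrange_lcosets : #|P| %| #|T|.
Proof.
have uniform : {in [set lcoset a | a in T], forall A : {set T}, #|A| = #|P|}.
  by move=> _ /imsetP[a _ ->]; apply: card_lcoset.
by rewrite -cardsT (card_uniform_partition uniform lcoset_partition) dvdn_mull.
Qed.

End LeftCosets.

Section Powers.
Variable x : T.
Hypothesis npowA :
  forall a m n, mul (mul a (npow mul e x m)) (npow mul e x n) = mul a (npow mul e x (m + n)).

Local Notation xn := (npow mul e x).

Lemma npowD m n : mul (xn m) (xn n) = xn (m + n).
Proof. by have := npowA e m n; rewrite !mul_idl. Qed.

Definition npow_period : nat := #[perm (@mulIr x)]%g.

Local Notation k := npow_period.

Lemma npow_period_gt0 : 0 < k. Proof. exact: order_gt0. Qed.

Lemma npow_period_id : xn k = e.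
Proof.
have := permX (perm (@mulIr x)) e k; rewrite expg_order perm1 => {2}->.
by apply: eq_iter => y; rewrite permE.
Qed.

Lemma npow_modn n : xn n = xn (n %% k).
Proof.
have npow_mulk q : xn (q * k) = e.
  by elim: q => // q IHq; rewrite mulSn -npowD npow_period_id IHq mul_idl.
by rewrite {1}(divn_eq n k) -npowD npow_mulk mul_idl.
Qed.

Lemma npow_addk n : xn (n + k) = xn n.
Proof. by rewrite -npowD npow_period_id mul_idr. Qed.

Definition powers : {set T} := [set xn i | i : 'I_k].

Lemma mem_powers n : xn n \in powers.
Proof.
by rewrite npow_modn; apply/imsetP; exists (Ordinal (ltn_pmod n npow_period_gt0)).
Qed.

Lemma powers_subloop : subloop_closed mul e powers.
Proof.
apply/forall_inP => _ /imsetP[i _ ->]; apply/forall_inP => _ /imsetP[j _ ->].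
have lt_ik := ltn_ord i; have lt_jk := ltn_ord j.
apply/and3P; split; first by rewrite npowD mem_powers.
- have -> : xn j = mul (xn i) (xn (j + (k - i))).
    by rewrite npowD -[in LHS]npow_addk; congr xn; lia.
  by rewrite ldiv_mul mem_powers.
- have -> : xn i = mul (xn (i + (k - j))) (xn j).
    by rewrite npowD -[in LHS]npow_addk; congr xn; lia.
  by rewrite rdiv_mul mem_powers.
Qed.

Lemma npow_subloop (S : {set T}) n : x \in S -> subloop_closed mul e S -> xn n \in S.
Proof.
move=> Sx /forall_inP closedS.
have mulS a b : a \in S -> b \in S -> mul a b \in S /\ ldiv mul e a b \in S.
  by move=> Sa Sb; case/forall_inP/(_ b Sb)/and3P: (closedS a Sa).
elim: n => [|n IHn]; last by case: (mulS _ _ IHn Sx).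
by case: (mulS _ _ Sx Sx) => _; rewrite -[x in ldiv _ _ _ x]mul_idr ldiv_mul.
Qed.

Lemma gen_powers : gen mul e x = powers.
Proof.
apply/eqP; rewrite eqEsubset; apply/andP; split.
  apply: bigcap_inf; rewrite powers_subloop andbT.
  by have := mem_powers 1; rewrite /npow /= mul_idl.
by apply/bigcapsP => S /andP[Sx closedS]; apply/subsetP => _ /imsetP[i _ ->];
  apply: npow_subloop.
Qed.

Lemma powers_lcoset_mulr a :
  {in powers &, forall p q, mul (mul a p) q \in lcoset powers a}.
Proof.
move=> _ _ /imsetP[i _ ->] /imsetP[j _ ->].
by rewrite npowA; apply: imset_f; apply: mem_powers.
Qed.

End Powers.
End Loop.

Theorem lemma1p10 (T : finType) (mul : T -> T -> T) (e : T) :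
  is_loop mul e ->
  power_associative mul e ->
  (forall (a b : T) (i j : int),
     mul (mul a (zpow mul e b i)) (zpow mul e b j) = mul a (zpow mul e b (i + j)%R)) ->
  forall x : T, elt_order mul e x %| #|T|.
Proof.
move=> loopT _ zpowA x.
have npowA a m n : mul (mul a (npow mul e x m)) (npow mul e x n) = mul a (npow mul e x (m + n)).
  by have := zpowA a x m n; rewrite -PoszD.
rewrite /elt_order (gen_powers loopT npowA).
apply: (lagrange_lcosets loopT (mem_powers loopT npowA 0)).
exact: powers_lcoset_mulr.
Qed.
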